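(* Let $N\ge2$, $\hbar>0$, $\lambda\in\mathbb{R}^N$, $\mu^{(N)}_i=-\imath\hbar^{-1}\lambda_i-\frac12(N-2i+1)$, and let $\xi^{(i)}_R,\xi^{(i)}_L$ ($i=1,\dots,N-1$) be nonzero complex numbers. Consider functions of the real variables $T_{k,i}$, $1\le i\le k\le N-1$, with the convention $T_{N,i}=0$, and the first order differential operators $$E^{(N)}_{i,i+1}=\sum_{n=1}^i\Big(\sum_{k=n}^ie^{T_{N+k-i,k}-T_{N+k-i-1,k}}\Big)\Big(\frac{\partial}{\partial T_{N+n-i-1,n}}-\frac{\partial}{\partial T_{N+n-i-1,n-1}}\Big),$$ $$E^{(N)}_{i+1,i}=\sum_{k=i}^{N-1}e^{T_{k,i}-T_{k+1,i+1}}\Big(\mu^{(N)}_i-\mu^{(N)}_{i+1}+\sum_{s=i}^k\Big(\frac{\partial}{\partial T_{s,i+1}}-\frac{\partial}{\partial T_{s,i}}\Big)\Big),$$ for $i=1,\dots,N-1$ (derivatives with respect to symbols $T_{k,j}$ with $j>k$ or $j=0$ are omitted, empty sums are zero). Then the functions $$\psi^{(N)}_R=\exp\Big\{\sum_{i=1}^{N-1}\xi^{(i)}_R\sum_{k=i}^{N-1}e^{T_{k,i}-T_{k+1,i+1}}\Big\},$$ $$\psi^{(N)}_L=\exp\Big\{\sum_{k=1}^{N-1}\sum_{i=1}^k(\mu^{(N)}_k-\mu^{(N)}_{k+1})T_{k,i}+\sum_{i=1}^{N-1}\xi^{(i)}_L\sum_{k=1}^{N-i}e^{T_{k+i,k}-T_{k+i-1,k}}\Big\}$$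 satisfy, for all $i=1,\dots,N-1$, $$E^{(N)}_{i,i+1}\psi^{(N)}_R=\xi^{(i)}_R\psi^{(N)}_R,\qquad E^{(N)}_{i+1,i}\psi^{(N)}_L=\xi^{(N-i)}_L\psi^{(N)}_L.$$
   Context: These operators are the images of the simple root generators of $\mathfrak{gl}(N)$ in the principal series representation realized on functions of the totally positive unipotent upper-triangular matrices, parametrized by the coordinates $T_{k,i}$ ($1\le i\le k\le N-1$, $T_{N,i}=0$) via $x(T)=\tilde U_2U_2^{-1}\cdots\tilde U_{N-1}U_{N-1}^{-1}\tilde U_N$ with $U_k=\sum_{i\le k}e^{T_{k,i}}e_{i,i}+\sum_{i>k}e_{i,i}$, $\tilde U_k=U_k+\sum_{i=1}^{k-1}e^{T_{k-1,i}}e_{i,i+1}$. *)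

From Stdlib Require Import Reals Arith.
From Coquelicot Require Import Coquelicot.
Open Scope R_scope.

Definition Cexp (z : C) : C :=
  (exp (fst z) * cos (snd z), exp (fst z) * sin (snd z)).

(* A point of the coordinate space: T k i is the value of T_{k,i}.
   Only the coordinates with 1 <= i <= k <= N-1 are genuine variables. *)
Definition Coords := nat -> nat -> R.

Definition tri (N k i : nat) : bool :=
  (1 <=? i)%nat && (i <=? k)%nat && (k <=? N - 1)%nat.

(* value of the symbol T_{k,i}; in particular T_{N,i} = 0 *)
Definition Tv (N : nat) (T : Coords) (k i : nat) : R :=
  if tri N k i then T k i else 0.

Definition upd (T : Coords) (k i : nat) (t : R) : Coords :=
  fun k' i' => if (Nat.eqb k' k && Nat.eqb i' i)%bool then t else T k' i'.

(* partial derivative d/dT_{k,i} of a complex valued function (computed on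
   real and imaginary parts); derivatives w.r.t. symbols T_{k,i} that are not
   variables (i > k, i = 0, ...) are omitted, i.e. contribute 0. *)
Definition pderiv (N : nat) (f : Coords -> C) (k i : nat) (T : Coords) : C :=
  if tri N k i then
    (Derive (fun t => fst (f (upd T k i t))) (T k i),
     Derive (fun t => snd (f (upd T k i t))) (T k i))
  else 0%C.

Definition mu (N : nat) (hbar : R) (lam : nat -> R) (i : nat) : C :=
  (- ((INR N - 2 * INR i + 1) / 2), - (lam i / hbar)).

Definition csum (a : nat -> C) (n m : nat) : C := sum_n_m (G := C_AbelianGroup) a n m.

Definition E_up (N : nat) (f : Coords -> C) (i : nat) (T : Coords) : C :=
  csum (fun n =>
    (csum (fun k => RtoC (exp (Tv N T (N + k - i) k - Tv N T (N + k - i - 1) k))) n i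
     * (pderiv N f (N + n - i - 1) n T - pderiv N f (N + n - i - 1) (n - 1) T))%C)
    1 i.

Definition E_down (N : nat) (hbar : R) (lam : nat -> R) (f : Coords -> C)
    (i : nat) (T : Coords) : C :=
  csum (fun k =>
    (RtoC (exp (Tv N T k i - Tv N T (k + 1) (i + 1)))
     * ((mu N hbar lam i - mu N hbar lam (i + 1)) * f T
        + csum (fun s => pderiv N f s (i + 1) T - pderiv N f s i T) i k))%C)
    i (N - 1).

Definition psiR (N : nat) (xiR : nat -> C) (T : Coords) : C :=
  Cexp (csum (fun i =>
    (xiR i * csum (fun k => RtoC (exp (Tv N T k i - Tv N T (k + 1) (i + 1)))) i (N - 1))%C)
    1 (N - 1)).

Definition psiL (N : nat) (hbar : R) (lam : nat -> R) (xiL : nat -> C)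
    (T : Coords) : C :=
  Cexp (csum (fun k => csum (fun i =>
            ((mu N hbar lam k - mu N hbar lam (k + 1)) * RtoC (Tv N T k i))%C) 1 k)
          1 (N - 1)
        + csum (fun i =>
            (xiL i * csum (fun k => RtoC (exp (Tv N T (k + i) k - Tv N T (k + i - 1) k)))
                            1 (N - i))%C)
          1 (N - 1))%C.

(* Both eigenfunctions have the form [Cexp S] and both operators are first order (up to the
   constant mu-term of E_{i+1,i}), so [E psi = (E S) psi].  The exponent [S] is a
   xi-combination of sums of exponentials e^{T_{k,j} - T_{k+1,j+1}}, resp.
   e^{T_{k+j,k} - T_{k+j-1,k}}, plus for psi_L a linear term whose derivative cancels the
   mu-term.  Applied to the j-th sum, the operator telescopes down to two boundary terms;
   since e^x e^y = e^{x+y} these cancel, except for the one j where a boundary term reaches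
   the row T_{N,.} = 0 and equals 1. *)

From Stdlib Require Import Reals Arith Lia Lra FunctionalExtensionality.
From Coquelicot Require Import Coquelicot.
Open Scope R_scope.
Set Bullet Behavior "Strict Subproofs".

Definition is_derive_C (g : R -> C) (x : R) (d : C) : Prop :=
  is_derive (fun t => fst (g t)) x (fst d) /\ is_derive (fun t => snd (g t)) x (snd d).

Lemma is_derive_C_ext g h x d :
  (forall t, g t = h t) -> is_derive_C g x d -> is_derive_C h x d.
Proof.
  intros E [H1 H2]; split; eapply is_derive_ext; eauto; intros t; simpl; now rewrite E.
Qed.

Lemma is_derive_C_const (c : C) x : is_derive_C (fun _ => c) x 0%C.
Proof. split; exact (is_derive_const _ x). Qed.

Lemma is_derive_C_RtoC (f : R -> R) x a :
  is_derive f x a -> is_derive_C (fun t => RtoC (f t)) x (RtoC a).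
Proof. intros H; split; [exact H | exact (is_derive_const _ x)]. Qed.

Lemma is_derive_C_plus g h x a b :
  is_derive_C g x a -> is_derive_C h x b -> is_derive_C (fun t => g t + h t)%C x (a + b)%C.
Proof.
  intros [Hg1 Hg2] [Hh1 Hh2]; split.
  - exact (is_derive_plus (fun t => fst (g t)) (fun t => fst (h t)) x _ _ Hg1 Hh1).
  - exact (is_derive_plus (fun t => snd (g t)) (fun t => snd (h t)) x _ _ Hg2 Hh2).
Qed.

Lemma is_derive_C_scal (c : C) g x d :
  is_derive_C g x d -> is_derive_C (fun t => c * g t)%C x (c * d)%C.
Proof.
  intros [H1 H2]; split.
  - exact (is_derive_minus _ _ x _ _
             (is_derive_scal _ x (fst c) _ H1) (is_derive_scal _ x (snd c) _ H2)).
  - exact (is_derive_plus _ _ x _ _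
             (is_derive_scal _ x (fst c) _ H2) (is_derive_scal _ x (snd c) _ H1)).
Qed.

Lemma is_derive_C_Cexp g x d :
  is_derive_C g x d -> is_derive_C (fun t => Cexp (g t)) x (d * Cexp (g x))%C.
Proof.
  intros [H1 H2].
  assert (Hexp := is_derive_comp exp _ x _ _ (is_derive_exp _) H1).
  assert (Hcos := is_derive_comp cos _ x _ _ (is_derive_cos _) H2).
  assert (Hsin := is_derive_comp sin _ x _ _ (is_derive_sin _) H2).
  split.
  - refine (eq_rect _ (is_derive _ x) (is_derive_mult _ _ x _ _ Hexp Hcos Rmult_comm) _ _).
    cbn; ring.
  - refine (eq_rect _ (is_derive _ x) (is_derive_mult _ _ x _ _ Hexp Hsin Rmult_comm) _ _).
    cbn; ring.
Qed.

Lemma is_derive_C_csum (g : nat -> R -> C) (d : nat -> C) x n m :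
  (forall k, (n <= k <= m)%nat -> is_derive_C (g k) x (d k)) ->
  is_derive_C (fun t => csum (fun k => g k t) n m) x (csum d n m).
Proof.
  unfold csum; intros H.
  destruct (le_lt_dec n m) as [Hnm|Hmn].
  2:{ eapply is_derive_C_ext.
      - intros t; symmetry; apply (sum_n_m_zero (fun k => g k t)); exact Hmn.
      - rewrite sum_n_m_zero by exact Hmn; apply is_derive_C_const. }
  revert H; induction Hnm as [|m Hnm IH]; intros H.
  - eapply is_derive_C_ext.
    + intros t; symmetry; apply (sum_n_n (fun k => g k t)).
    + rewrite sum_n_n; apply H; lia.
  - eapply is_derive_C_ext.
    + intros t; symmetry; apply (sum_n_Sm (fun k => g k t)); lia.
    + rewrite sum_n_Sm by lia.
      apply is_derive_C_plus; [apply IH; intros; apply H|apply H]; lia.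
Qed.

Section Sums.
Context {G : AbelianMonoid}.

Lemma sum_n_m_pick (f : nat -> G) n m c :
  sum_n_m (fun k => if k =? c then f k else zero) n m =
  if ((n <=? c) && (c <=? m))%bool then f c else zero.
Proof.
  destruct (le_lt_dec n m) as [Hnm|Hmn].
  2:{ rewrite sum_n_m_zero by exact Hmn.
      destruct (Nat.leb_spec n c), (Nat.leb_spec c m); simpl; auto; lia. }
  induction Hnm as [|m Hnm IH].
  - rewrite sum_n_n.
    destruct (Nat.eqb_spec n c), (Nat.leb_spec n c), (Nat.leb_spec c n); subst; simpl; auto; lia.
  - rewrite sum_n_Sm, IH by lia.
    destruct (Nat.eqb_spec (S m) c), (Nat.leb_spec n c), (Nat.leb_spec c m),
      (Nat.leb_spec c (S m)); subst; simpl;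
      rewrite ?plus_zero_l, ?plus_zero_r; auto; lia.
Qed.

Lemma sum_n_m_swap (f : nat -> nat -> G) a b c d :
  sum_n_m (fun x => sum_n_m (fun y => f x y) c d) a b =
  sum_n_m (fun y => sum_n_m (fun x => f x y) a b) c d.
Proof.
  destruct (le_lt_dec a b) as [Hab|Hba].
  2:{ rewrite sum_n_m_zero by exact Hba. symmetry.
      rewrite (sum_n_m_ext _ (fun _ => zero)), sum_n_m_const_zero; auto.
      intros y; apply sum_n_m_zero; exact Hba. }
  induction Hab as [|b Hab IH].
  - rewrite sum_n_n. apply sum_n_m_ext; intros y; now rewrite sum_n_n.
  - rewrite sum_n_Sm, IH, <- sum_n_m_plus by lia.
    apply sum_n_m_ext; intros y; now rewrite sum_n_Sm by lia.
Qed.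

End Sums.

Definition rsum (f : nat -> R) (n m : nat) : R := sum_n_m (G := R_AbelianGroup) f n m.

Lemma rsum_ext f g n m :
  (forall k, (n <= k <= m)%nat -> f k = g k) -> rsum f n m = rsum g n m.
Proof. apply sum_n_m_ext_loc. Qed.

Lemma rsum_plus f g n m : rsum (fun k => f k + g k) n m = rsum f n m + rsum g n m.
Proof. exact (sum_n_m_plus f g n m). Qed.

Lemma rsum_minus f g n m : rsum (fun k => f k - g k) n m = rsum f n m - rsum g n m.
Proof.
  rewrite (rsum_ext f (fun k => (f k - g k) + g k)) by (intros; ring).
  rewrite rsum_plus; ring.
Qed.

Lemma rsum_pick f n m c :
  rsum (fun k => if k =? c then f k else 0) n m =
  if ((n <=? c) && (c <=? m))%bool then f c else 0.
Proof. exact (sum_n_m_pick f n m c). Qed.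

Lemma rsum_Sn f n m : (n <= m)%nat -> rsum f n m = f n + rsum f (S n) m.
Proof. exact (sum_Sn_m f n m). Qed.

Lemma rsum_empty f n m : (m < n)%nat -> rsum f n m = 0.
Proof. exact (sum_n_m_zero f n m). Qed.

Lemma csum_ext (f g : nat -> C) n m :
  (forall k, (n <= k <= m)%nat -> f k = g k) -> csum f n m = csum g n m.
Proof. apply sum_n_m_ext_loc. Qed.

Lemma csum_zero (f : nat -> C) n m :
  (forall k, (n <= k <= m)%nat -> f k = 0%C) -> csum f n m = 0%C.
Proof.
  intros H; rewrite (csum_ext f (fun _ => zero)) by exact H.
  exact (sum_n_m_const_zero n m).
Qed.

Lemma csum_plus (f g : nat -> C) n m :
  csum (fun k => f k + g k)%C n m = (csum f n m + csum g n m)%C.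
Proof. exact (sum_n_m_plus f g n m). Qed.

Lemma csum_minus (f g : nat -> C) n m :
  csum (fun k => f k - g k)%C n m = (csum f n m - csum g n m)%C.
Proof.
  rewrite (csum_ext f (fun k => (f k - g k) + g k)%C) by (intros; ring).
  rewrite csum_plus; ring.
Qed.

Lemma csum_scal (c : C) f n m : csum (fun k => c * f k)%C n m = (c * csum f n m)%C.
Proof. exact (sum_n_m_mult_l (K := C_Ring) c f n m). Qed.

Lemma csum_scal_r (c : C) f n m : csum (fun k => f k * c)%C n m = (csum f n m * c)%C.
Proof. exact (sum_n_m_mult_r (K := C_Ring) c f n m). Qed.

Lemma csum_swap (f : nat -> nat -> C) a b c d :
  csum (fun x => csum (fun y => f x y) c d) a b = csum (fun y => csum (fun x => f x y) a b) c d.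
Proof. exact (sum_n_m_swap f a b c d). Qed.

Lemma csum_pick (f : nat -> C) n m c :
  csum (fun k => if k =? c then f k else 0%C) n m =
  if ((n <=? c) && (c <=? m))%bool then f c else 0%C.
Proof. exact (sum_n_m_pick f n m c). Qed.

Lemma RtoC_rsum f n m : RtoC (rsum f n m) = csum (fun k => RtoC (f k)) n m.
Proof.
  unfold rsum, csum.
  destruct (le_lt_dec n m) as [Hnm|Hmn].
  2: now rewrite !sum_n_m_zero by exact Hmn.
  induction Hnm as [|m Hnm IH]; [now rewrite !sum_n_n|].
  rewrite !sum_n_Sm, <- IH by lia. apply RtoC_plus.
Qed.

Ltac case_guards :=
  unfold tri in *;
  repeat match goal with
  | |- context [if ?c then _ else _] =>
      let E := fresh "E" in
      destruct c eqn:E;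
      rewrite ?Bool.andb_true_iff, ?Bool.andb_false_iff, ?Nat.leb_le, ?Nat.leb_gt,
        ?Nat.eqb_eq, ?Nat.eqb_neq in E;
      try (exfalso; lia)
  end.

(* [dTv N a b k i] is dT_{k,i}/dT_{a,b}; it vanishes when T_{k,i} is not a variable. *)
Definition dTv (N a b k i : nat) : R :=
  if (tri N k i && (k =? a) && (i =? b))%bool then 1 else 0.

Lemma is_derive_Tv_upd N T a b k i x :
  is_derive (fun t => Tv N (upd T a b t) k i) x (dTv N a b k i).
Proof.
  unfold Tv, upd, dTv.
  destruct (tri N k i); simpl; [|exact (is_derive_const _ x)].
  destruct (Nat.eqb k a && Nat.eqb i b)%bool; [exact (is_derive_id x)|exact (is_derive_const _ x)].
Qed.

Lemma upd_same T a b : upd T a b (T a b) = T.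
Proof.
  apply functional_extensionality; intros k; apply functional_extensionality; intros i.
  unfold upd; destruct (Nat.eqb_spec k a), (Nat.eqb_spec i b); subst; reflexivity.
Qed.

Definition expdiff N (T : Coords) k i k' i' : R := exp (Tv N T k i - Tv N T k' i').

Lemma is_derive_expdiff N T a b k i k' i' :
  is_derive (fun t => expdiff N (upd T a b t) k i k' i') (T a b)
    (expdiff N T k i k' i' * (dTv N a b k i - dTv N a b k' i')).
Proof.
  refine (eq_rect _ (is_derive _ (T a b))
    (is_derive_comp exp _ (T a b) _ _ (is_derive_exp _)
      (is_derive_minus _ _ _ _ _
        (is_derive_Tv_upd N T a b k i _) (is_derive_Tv_upd N T a b k' i' _))) _ _).
  rewrite upd_same; unfold expdiff, Rminus; cbn; ring.
Qed.

Lemma expdiff_mult N T k i k' i' l j l' j' :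
  expdiff N T k i k' i' * expdiff N T l j l' j' =
  exp (Tv N T k i - Tv N T k' i' + (Tv N T l j - Tv N T l' j')).
Proof. unfold expdiff; now rewrite exp_plus. Qed.

Lemma Tv_top N T j : (1 <= N)%nat -> Tv N T N j = 0.
Proof. intros HN; unfold Tv; case_guards; reflexivity. Qed.

Lemma pderiv_Cexp N (S : Coords -> C) (D : C) a b T :
  (tri N a b = true -> is_derive_C (fun t => S (upd T a b t)) (T a b) D) ->
  (tri N a b = false -> D = 0%C) ->
  pderiv N (fun T => Cexp (S T)) a b T = (D * Cexp (S T))%C.
Proof.
  intros Hder Hzero; unfold pderiv.
  destruct (tri N a b) eqn:E.
  - destruct (is_derive_C_Cexp _ _ _ (Hder eq_refl)) as [H1 H2].
    rewrite upd_same in H1, H2.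
    apply injective_projections; apply is_derive_unique; assumption.
  - rewrite Hzero by reflexivity; ring.
Qed.

Definition lincomb (xi : nat -> C) (g : nat -> R) (M : nat) : C :=
  csum (fun j => xi j * RtoC (g j))%C 1 M.

Lemma lincomb_ext xi g h M :
  (forall j, (1 <= j <= M)%nat -> g j = h j) -> lincomb xi g M = lincomb xi h M.
Proof. intros H; apply csum_ext; intros j Hj; now rewrite H. Qed.

Lemma lincomb_minus xi g h M :
  (lincomb xi g M - lincomb xi h M)%C = lincomb xi (fun j => g j - h j) M.
Proof.
  unfold lincomb; rewrite <- csum_minus; apply csum_ext; intros j _.
  rewrite RtoC_minus; ring.
Qed.

Lemma lincomb_scal xi (w : R) g M :
  (RtoC w * lincomb xi g M)%C = lincomb xi (fun j => w * g j) M.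
Proof.
  unfold lincomb; rewrite <- csum_scal; apply csum_ext; intros j _.
  rewrite RtoC_mult; ring.
Qed.

Lemma csum_lincomb xi (g : nat -> nat -> R) M n m :
  csum (fun k => lincomb xi (g k) M) n m = lincomb xi (fun j => rsum (fun k => g k j) n m) M.
Proof.
  unfold lincomb; rewrite csum_swap; apply csum_ext; intros j _.
  now rewrite RtoC_rsum, <- csum_scal.
Qed.

Lemma lincomb_delta xi M c : (1 <= c <= M)%nat ->
  lincomb xi (fun j => if j =? c then 1 else 0) M = xi c.
Proof.
  intros Hc; unfold lincomb.
  rewrite (csum_ext _ (fun j => if j =? c then xi j else 0%C))
    by (intros j _; destruct (j =? c); ring).
  rewrite csum_pick; case_guards; reflexivity.
Qed.

Definition eR N T k j : R := expdiff N T k j (k + 1) (j + 1).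

Definition SR N (xiR : nat -> C) T : C :=
  csum (fun j => xiR j * csum (fun k => RtoC (eR N T k j)) j (N - 1))%C 1 (N - 1).

Definition dchainR N T a b j : R :=
  rsum (fun k => eR N T k j * (dTv N a b k j - dTv N a b (k + 1) (j + 1))) j (N - 1).

Definition dSR N (xiR : nat -> C) T a b : C := lincomb xiR (dchainR N T a b) (N - 1).

Lemma is_derive_SR N xiR T a b :
  is_derive_C (fun t => SR N xiR (upd T a b t)) (T a b) (dSR N xiR T a b).
Proof.
  apply is_derive_C_csum; intros j _; apply is_derive_C_scal.
  unfold dchainR; rewrite RtoC_rsum.
  apply is_derive_C_csum; intros k _.
  apply is_derive_C_RtoC, is_derive_expdiff.
Qed.

Lemma dchainR_closed N T a b j : (1 <= j)%nat ->
  dchainR N T a b j =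
  if tri N a b
  then (if b =? j then eR N T a j else 0) - (if b =? j + 1 then eR N T (a - 1) j else 0)
  else 0.
Proof.
  intros Hj; unfold dchainR.
  rewrite (rsum_ext _ (fun k =>
      (if k =? a then if (tri N a b && (b =? j))%bool then eR N T k j else 0 else 0) -
      (if k =? a - 1 then if (tri N a b && (b =? j + 1))%bool then eR N T k j else 0 else 0)))
    by (intros k Hk; unfold dTv; case_guards; ring).
  rewrite rsum_minus, !rsum_pick; case_guards; ring.
Qed.

Lemma pderiv_psiR N xiR T a b :
  pderiv N (psiR N xiR) a b T = (dSR N xiR T a b * psiR N xiR T)%C.
Proof.
  apply (pderiv_Cexp N (SR N xiR)); [intros; apply is_derive_SR|].
  intros Hab; apply csum_zero; intros j Hj.
  rewrite dchainR_closed, Hab by lia; ring.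
Qed.

Definition upterm N T i n : R := expdiff N T (N + n - i) n (N + n - i - 1) n.

Definition upcoef N T i n : R := rsum (fun k => upterm N T i k) n i.

Lemma upcoef_step N T i n : (n <= i)%nat -> upcoef N T i n = upterm N T i n + upcoef N T i (n + 1).
Proof. intros Hn; unfold upcoef; rewrite rsum_Sn, Nat.add_1_r by exact Hn; reflexivity. Qed.

Lemma upcoef_out N T i n : (i < n)%nat -> upcoef N T i n = 0.
Proof. apply rsum_empty. Qed.

Lemma eR_mul_upterm_last N T i : (1 <= i <= N - 1)%nat ->
  eR N T (N - 1) i * upterm N T i i = 1.
Proof.
  intros Hi; unfold eR, upterm; rewrite expdiff_mult.
  replace (N - 1 + 1)%nat with N by lia; replace (N + i - i)%nat with N by lia.
  replace (N + i - i - 1)%nat with (N - 1)%nat by lia.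
  rewrite !Tv_top, <- exp_0 by lia; apply f_equal; ring.
Qed.

Lemma eR_mul_upterm_shift N T i j : (j < i <= N - 1)%nat ->
  eR N T (N + j - i - 1) j * upterm N T i j = eR N T (N + j - i) j * upterm N T i (j + 1).
Proof.
  intros Hji; unfold eR, upterm; rewrite !expdiff_mult.
  replace (N + j - i - 1 + 1)%nat with (N + j - i)%nat by lia.
  replace (N + (j + 1) - i - 1)%nat with (N + j - i)%nat by lia.
  replace (N + (j + 1) - i)%nat with (N + j - i + 1)%nat by lia.
  apply f_equal; ring.
Qed.

Lemma E_up_chainR N T i j : (1 <= i <= N - 1)%nat -> (1 <= j)%nat ->
  rsum (fun n => upcoef N T i n *
          (dchainR N T (N + n - i - 1) n j - dchainR N T (N + n - i - 1) (n - 1) j)) 1 i =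
  if j =? i then 1 else 0.
Proof.
  intros Hi Hj.
  (* With A := upcoef, the sum is c (A j - A (j+1)) - d (A (j+1) - A (j+2)). *)
  set (c := eR N T (N + j - i - 1) j); set (d := eR N T (N + j - i) j).
  rewrite (rsum_ext _ (fun n =>
      (if n =? j then upcoef N T i n * c else 0) -
      (if n =? j + 1 then upcoef N T i n * (c + d) else 0) +
      (if n =? j + 2 then upcoef N T i n * d else 0))).
  2:{ intros n Hn; rewrite !dchainR_closed by lia; case_guards; subst.
      all: unfold c, d; try ring.
      - replace (N + (j + 1) - i - 1 - 1)%nat with (N + j - i - 1)%nat by lia.
        replace (N + (j + 1) - i - 1)%nat with (N + j - i)%nat by lia; ring.
      - replace (N + (j + 2) - i - 1 - 1)%nat with (N + j - i)%nat by lia; ring. }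
  rewrite rsum_plus, rsum_minus, !rsum_pick.
  destruct (lt_eq_lt_dec j i) as [[Hlt|<-]|Hgt].
  - assert (Hshift := eR_mul_upterm_shift N T i j (conj Hlt (proj2 Hi))).
    rewrite (upcoef_step N T i j), (upcoef_step N T i (j + 1)) by lia.
    replace (j + 1 + 1)%nat with (j + 2)%nat by lia.
    case_guards; rewrite ?(upcoef_out N T i (j + 2)) by lia; unfold c, d; lra.
  - assert (Hlast := eR_mul_upterm_last N T j Hi).
    rewrite (upcoef_step N T j j), (upcoef_out N T j (j + 1)) by lia.
    unfold c; replace (N + j - j - 1)%nat with (N - 1)%nat by lia.
    case_guards; lra.
  - case_guards; ring.
Qed.

Lemma E_up_psiR N xiR i T : (1 <= i <= N - 1)%nat ->
  E_up N (psiR N xiR) i T = (xiR i * psiR N xiR T)%C.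
Proof.
  intros Hi; unfold E_up.
  rewrite (csum_ext _ (fun n => RtoC (upcoef N T i n) *
      (dSR N xiR T (N + n - i - 1) n - dSR N xiR T (N + n - i - 1) (n - 1)) * psiR N xiR T)%C)
    by (intros n _; rewrite !pderiv_psiR; unfold upcoef, upterm, expdiff; rewrite RtoC_rsum; ring).
  rewrite csum_scal_r; f_equal.
  rewrite (csum_ext _ (fun n => lincomb xiR (fun j => upcoef N T i n *
      (dchainR N T (N + n - i - 1) n j - dchainR N T (N + n - i - 1) (n - 1) j)) (N - 1)))
    by (intros n _; unfold dSR; rewrite lincomb_minus, lincomb_scal; reflexivity).
  rewrite csum_lincomb, <- (lincomb_delta xiR (N - 1) i Hi).
  apply lincomb_ext; intros j Hj; apply E_up_chainR; lia.
Qed.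

Definition eL N T j k : R := expdiff N T (k + j) k (k + j - 1) k.

Definition dchainL N T a b j : R :=
  rsum (fun k => eL N T j k * (dTv N a b (k + j) k - dTv N a b (k + j - 1) k)) 1 (N - j).

Definition dlinL N hbar lam a b : C :=
  csum (fun k => csum (fun i =>
    (mu N hbar lam k - mu N hbar lam (k + 1)) * RtoC (dTv N a b k i))%C 1 k) 1 (N - 1).

Definition SL N hbar lam (xiL : nat -> C) T : C :=
  (csum (fun k => csum (fun i =>
     (mu N hbar lam k - mu N hbar lam (k + 1)) * RtoC (Tv N T k i))%C 1 k) 1 (N - 1) +
   csum (fun j => xiL j * csum (fun k => RtoC (eL N T j k)) 1 (N - j))%C 1 (N - 1))%C.

Definition dSL N hbar lam (xiL : nat -> C) T a b : C :=
  (dlinL N hbar lam a b + lincomb xiL (dchainL N T a b) (N - 1))%C.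

Lemma is_derive_SL N hbar lam xiL T a b :
  is_derive_C (fun t => SL N hbar lam xiL (upd T a b t)) (T a b) (dSL N hbar lam xiL T a b).
Proof.
  apply is_derive_C_plus.
  - apply is_derive_C_csum; intros k _; apply is_derive_C_csum; intros i _.
    apply is_derive_C_scal, is_derive_C_RtoC, is_derive_Tv_upd.
  - apply is_derive_C_csum; intros j _; apply is_derive_C_scal.
    unfold dchainL; rewrite RtoC_rsum.
    apply is_derive_C_csum; intros k _.
    apply is_derive_C_RtoC, is_derive_expdiff.
Qed.

Lemma dlinL_closed N hbar lam a b :
  dlinL N hbar lam a b =
  if tri N a b then (mu N hbar lam a - mu N hbar lam (a + 1))%C else 0%C.
Proof.
  unfold dlinL.
  rewrite (csum_ext _ (fun k =>
      if k =? a then if tri N a b then (mu N hbar lam k - mu N hbar lam (k + 1))%C else 0%C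
      else 0%C)).
  { rewrite csum_pick; case_guards; reflexivity. }
  intros k _.
  rewrite (csum_ext _ (fun i =>
      if i =? b then if (tri N k i && (k =? a))%bool
                     then (mu N hbar lam k - mu N hbar lam (k + 1))%C else 0%C
      else 0%C))
    by (intros i _; unfold dTv; case_guards; ring).
  rewrite csum_pick; case_guards; reflexivity.
Qed.

Lemma dchainL_closed N T a b j : (1 <= j)%nat ->
  dchainL N T a b j =
  if tri N a b
  then eL N T j b * ((if a =? b + j then 1 else 0) - (if a =? b + j - 1 then 1 else 0))
  else 0.
Proof.
  intros Hj; unfold dchainL.
  rewrite (rsum_ext _ (fun k => if k =? b then
      if tri N a b
      then eL N T j k * ((if a =? b + j then 1 else 0) - (if a =? b + j - 1 then 1 else 0))
      else 0
    else 0))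
    by (intros k _; unfold dTv; case_guards; ring).
  rewrite rsum_pick; case_guards; ring.
Qed.

Lemma pderiv_psiL N hbar lam xiL T a b :
  pderiv N (psiL N hbar lam xiL) a b T =
  (dSL N hbar lam xiL T a b * psiL N hbar lam xiL T)%C.
Proof.
  apply (pderiv_Cexp N (SL N hbar lam xiL)); [intros; apply is_derive_SL|].
  intros Hab; unfold dSL, lincomb; rewrite dlinL_closed, Hab.
  rewrite (csum_zero _ 1 (N - 1)); [ring|].
  intros j Hj; rewrite dchainL_closed, Hab by lia; ring.
Qed.

Lemma dlinL_telescope N hbar lam i k : (1 <= i <= k)%nat -> (k <= N - 1)%nat ->
  csum (fun s => dlinL N hbar lam s (i + 1) - dlinL N hbar lam s i)%C i k =
  (- (mu N hbar lam i - mu N hbar lam (i + 1)))%C.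
Proof.
  intros Hik Hk.
  rewrite (csum_ext _ (fun s =>
      if s =? i then (- (mu N hbar lam s - mu N hbar lam (s + 1)))%C else 0%C))
    by (intros s Hs; rewrite !dlinL_closed; case_guards; ring).
  rewrite csum_pick; case_guards; reflexivity.
Qed.

Lemma dchainL_telescope N T i j k : (1 <= i)%nat -> (1 <= j)%nat -> (i <= k <= N - 1)%nat ->
  rsum (fun s => dchainL N T s (i + 1) j - dchainL N T s i j) i k =
  (if k =? i + j - 1 then eL N T j i else 0) - (if k =? i + j then eL N T j (i + 1) else 0).
Proof.
  intros Hi Hj Hk.
  rewrite (rsum_ext _ (fun s =>
      (if s =? i + j + 1 then eL N T j (i + 1) else 0) -
      (if s =? i + j then eL N T j (i + 1) + eL N T j i else 0) +
      (if s =? i + j - 1 then eL N T j i else 0)))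
    by (intros s Hs; rewrite !dchainL_closed by lia; case_guards; ring).
  rewrite rsum_plus, rsum_minus, !rsum_pick; case_guards; ring.
Qed.

Lemma eR_mul_eL_last N T i : (1 <= i <= N - 1)%nat ->
  eR N T (N - 1) i * eL N T (N - i) i = 1.
Proof.
  intros Hi; unfold eR, eL; rewrite expdiff_mult.
  replace (N - 1 + 1)%nat with N by lia; replace (i + (N - i))%nat with N by lia.
  rewrite !Tv_top, <- exp_0 by lia; apply f_equal; ring.
Qed.

Lemma eR_mul_eL_shift N T i j : (1 <= j)%nat ->
  eR N T (i + j - 1) i * eL N T j i = eR N T (i + j) i * eL N T j (i + 1).
Proof.
  intros Hj; unfold eR, eL; rewrite !expdiff_mult.
  replace (i + j - 1 + 1)%nat with (i + j)%nat by lia.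
  replace (i + 1 + j - 1)%nat with (i + j)%nat by lia.
  replace (i + 1 + j)%nat with (i + j + 1)%nat by lia.
  apply f_equal; ring.
Qed.

Lemma E_down_chainL N T i j : (1 <= i <= N - 1)%nat -> (1 <= j)%nat ->
  rsum (fun k => eR N T k i * rsum (fun s => dchainL N T s (i + 1) j - dchainL N T s i j) i k)
    i (N - 1) =
  if j =? N - i then 1 else 0.
Proof.
  intros Hi Hj.
  rewrite (rsum_ext _ (fun k =>
      (if k =? i + j - 1 then eR N T k i * eL N T j i else 0) -
      (if k =? i + j then eR N T k i * eL N T j (i + 1) else 0)))
    by (intros k Hk; rewrite dchainL_telescope by lia; case_guards; ring).
  rewrite rsum_minus, !rsum_pick.
  destruct (lt_eq_lt_dec j (N - i)) as [[Hlt|Heq]|Hgt].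
  - assert (Hshift := eR_mul_eL_shift N T i j Hj); case_guards; lra.
  - subst j; replace (i + (N - i) - 1)%nat with (N - 1)%nat by lia.
    assert (Hlast := eR_mul_eL_last N T i Hi); case_guards; lra.
  - case_guards; ring.
Qed.

Lemma E_down_psiL N hbar lam xiL i T : (1 <= i <= N - 1)%nat ->
  E_down N hbar lam (psiL N hbar lam xiL) i T = (xiL (N - i)%nat * psiL N hbar lam xiL T)%C.
Proof.
  intros Hi; unfold E_down.
  rewrite (csum_ext _ (fun k => lincomb xiL (fun j => eR N T k i *
      rsum (fun s => dchainL N T s (i + 1) j - dchainL N T s i j) i k)%R (N - 1) *
      psiL N hbar lam xiL T)%C).
  2:{ intros k Hk.
      rewrite (csum_ext _ (fun s => (dSL N hbar lam xiL T s (i + 1) - dSL N hbar lam xiL T s i) *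
          psiL N hbar lam xiL T)%C) by (intros s _; rewrite !pderiv_psiL; ring).
      rewrite csum_scal_r.
      rewrite (csum_ext _ (fun s => (dlinL N hbar lam s (i + 1) - dlinL N hbar lam s i) +
          lincomb xiL (fun j => dchainL N T s (i + 1) j - dchainL N T s i j)%R (N - 1))%C)
        by (intros s _; unfold dSL; rewrite <- lincomb_minus; ring).
      rewrite csum_plus, dlinL_telescope, csum_lincomb, <- lincomb_scal by lia.
      unfold eR, expdiff; ring. }
  rewrite csum_scal_r, csum_lincomb; f_equal.
  rewrite <- (lincomb_delta xiL (N - 1) (N - i)) by lia.
  apply lincomb_ext; intros j Hj; apply E_down_chainL; lia.
Qed.

Theorem proposition2 (N : nat) (hbar : R) (lam : nat -> R)
    (xiR xiL : nat -> C) :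
  (2 <= N)%nat -> 0 < hbar ->
  (forall i : nat, (1 <= i <= N - 1)%nat -> xiR i <> 0%C) ->
  (forall i : nat, (1 <= i <= N - 1)%nat -> xiL i <> 0%C) ->
  forall i : nat, (1 <= i <= N - 1)%nat ->
  forall T : Coords,
    E_up N (psiR N xiR) i T = (xiR i * psiR N xiR T)%C /\
    E_down N hbar lam (psiL N hbar lam xiL) i T
      = (xiL (N - i)%nat * psiL N hbar lam xiL T)%C.
Proof.
  intros _ _ _ _ i Hi T; split.
  - exact (E_up_psiR N xiR i T Hi).
  - exact (E_down_psiL N hbar lam xiL i T Hi).
Qed.
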